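(* Let $n\ge 2$, $2\le r\le n$, $\lambda\ge1$ and $1\le k\le n-1$ be integers, and let $\mathcal{B}=\{B_1,\dots,B_{N^*}\}$ be a balanced incomplete block design $S_\lambda(2,r,n)$ on $I_n=\{1,\dots,n\}$ (blocks are $r$-element subsets of $I_n$, and every 2-element subset of $I_n$ is contained in exactly $\lambda$ blocks; $N^*=\lambda n(n-1)/(r(r-1))$). For $A\subseteq I_n$ with $|A|=n-k$ put $T(A)=\sum_{B\in\mathcal{B}:\,|B\cap A|\ge 2}(|B\cap A|-1)$ and $T=\max_{A\subseteq I_n,\,|A|=n-k}T(A)$. If $q$ is a prime power with $q>\binom{n}{k}TM$, where $M=\frac{\lambda n(n-1)}{r}-T$, then there exists a linear $(n,k,d)=(n,k,n-1)$ exact-repair regenerating code over $\mathbb{F}_q$ with $$\alpha=\frac{\lambda(n-1)}{r-1},\qquad \beta=\lambda,\qquad M=\frac{\lambda n(n-1)}{r}-T,$$ which has uncoded repair: when a node fails, each of the $n-1$ remaining nodes sends exactly $\lambda$ of its stored symbols, unchanged.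
   Context: A linear $(n,k,d)$ exact-repair regenerating code over $\mathbb{F}_q$ with parameters $(\alpha,\beta,M)$ stores on each of $n$ nodes $\alpha$ symbols of $\mathbb{F}_q$, each a linear function of a message in $\mathbb{F}_q^M$, such that (i) the message can be recovered from the contents of any $k$ nodes, and (ii) for any node $j$ and any set $A$ of $d$ other nodes, each node in $A$ sends $\beta$ symbols computed from its own content, and from the $d\beta$ received symbols the exact content of node $j$ can be reconstructed. *)

From HB Require Import structures.
From mathcomp Require Import all_boot all_order all_algebra all_field.
Set Implicit Arguments. Unset Strict Implicit. Unset Printing Implicit Defensive.
Import GRing.Theory.
Local Open Scope ring_scope.

(** ** Balanced incomplete block designs S_lambda(2, r, n) on 'I_n (= I_n, 0-based).
    Blocks form a sequence (repetitions allowed, i.e. a multiset B_1..B_N). *)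
Definition is_BIBD (n lam r : nat) (blocks : seq {set 'I_n}) : Prop :=
  (forall B, B \in blocks -> #|B| = r) /\
  (forall x y : 'I_n, x != y ->
     count (fun B : {set 'I_n} => (x \in B) && (y \in B)) blocks = lam).

Definition TA (n : nat) (blocks : seq {set 'I_n}) (A : {set 'I_n}) : nat :=
  (\sum_(B <- blocks | 1 < #|B :&: A|) (#|B :&: A| - 1))%N.

Definition Tmax (n k : nat) (blocks : seq {set 'I_n}) : nat :=
  (\max_(A : {set 'I_n} | #|A| == n - k) TA blocks A)%N.

Definition alpha_par (n r lam : nat) : nat := ((lam * (n - 1)) %/ (r - 1))%N.
Definition M_par (n r lam k : nat) (blocks : seq {set 'I_n}) : nat :=
  ((lam * n * (n - 1)) %/ r - Tmax k blocks)%N.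

Section Codes.
Variables (F : fieldType) (n M alpha : nat).

Definition content (G : 'I_n -> 'M[F]_(M, alpha)) (m : 'rV[F]_M) (i : 'I_n)
  : 'rV[F]_alpha := m *m G i.

Definition recoverable (k : nat) (G : 'I_n -> 'M[F]_(M, alpha)) : Prop :=
  forall K : {set 'I_n}, #|K| = k ->
  forall m m' : 'rV[F]_M,
    (forall i, i \in K -> content G m i = content G m' i) -> m = m'.

Definition linear_repairable (d beta : nat) (G : 'I_n -> 'M[F]_(M, alpha)) : Prop :=
  forall (j : 'I_n) (A : {set 'I_n}), #|A| = d -> j \notin A ->
  exists H : 'I_n -> 'M[F]_(alpha, beta),
  forall m m' : 'rV[F]_M,
    (forall i, i \in A -> content G m i *m H i = content G m' i *m H i) ->
    content G m j = content G m' j.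

Definition regenerating_code (k d beta : nat) (G : 'I_n -> 'M[F]_(M, alpha)) : Prop :=
  recoverable k G /\ linear_repairable d beta G.

Definition uncoded_repair (d beta : nat) (G : 'I_n -> 'M[F]_(M, alpha)) : Prop :=
  forall (j : 'I_n) (A : {set 'I_n}), #|A| = d -> j \notin A ->
  exists sel : 'I_n -> 'I_beta -> 'I_alpha,
    (forall i, injective (sel i)) /\
    forall m m' : 'rV[F]_M,
      (forall i, i \in A -> forall t : 'I_beta,
          content G m i 0 (sel i t) = content G m' i 0 (sel i t)) ->
      content G m j = content G m' j.
End Codes.

(* Give every block [B] a single parity-check code of length [|B|]: a codeword
   assigns a symbol to each incidence (B, x), x in B, the symbols of each block
   summing to 0; node x stores its alpha = lambda(n-1)/(r-1) symbols, one per
   block through x.  A lost symbol of node j in block B is minus the sum of the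
   other symbols of B, so each other node y sends, unchanged, its lambda symbols
   in the blocks through y and j.  These codewords form a space of dimension
   D = sum (|B| - 1) = lambda n (n-1)/r, and those vanishing on a set K of k
   nodes form a space of size at most q^T(K^c) <= q^T.  The code is the image
   of an M x D matrix E, M = D - T, whose row space meets none of these
   C(n,k) spaces nontrivially; E is built row by row, a new row being available
   as long as C(n,k) q^(T+s) < q^D for s < M, i.e. as soon as q > C(n,k). *)

From HB Require Import structures.
From mathcomp Require Import all_boot all_order all_algebra all_field.
From mathcomp Require Import zify.
Set Implicit Arguments. Unset Strict Implicit. Unset Printing Implicit Defensive.
Import GRing.Theory.

(* [pick] singles out a lead point of each set [C i]; for a block design the
   non-lead incidences index the free coordinates of the parity-check codes. *)
Definition nonlead (I T : finType) (C : I -> {set T}) : {set I * T} :=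
  [set p | (p.2 \in C p.1) && (Some p.2 != [pick y in C p.1])].

Lemma card_nonlead (I T : finType) (C : I -> {set T}) :
  #|nonlead C| = \sum_i (#|C i| - 1).
Proof.
rewrite -sum1_card -(eq_bigl _ _ (fun p => esym (in_set _ p))).
rewrite -(pair_big_dep xpredT (fun i y => (y \in C i) && (Some y != [pick z in C i])) (fun _ _ => 1)).
apply: eq_bigr => i _; rewrite sum1_card.
case: pickP => [l lC | C0].
  rewrite (cardsD1 l (C i)) lC add1n subn1 /=.
  by apply: eq_card => y; rewrite unfold_in !inE (inj_eq Some_inj) andbC.
have -> : C i = set0 by apply/setP => y; rewrite C0 inE.
by rewrite cards0; apply: eq_card0 => y; rewrite unfold_in inE.
Qed.

Lemma subseq_index_map (T : eqType) (x0 : T) (s s' : seq T) (l a : nat) :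
  uniq s -> {subset s <= s'} -> l <= size s -> size s' = a ->
  {sel : 'I_l -> 'I_a | injective sel & forall t, nth x0 s' (sel t) = nth x0 s t}.
Proof.
move=> s_uniq ss' ls s'a.
have mem_s (t : 'I_l) : nth x0 s t \in s by rewrite mem_nth // (leq_trans _ ls).
have idx_lt (t : 'I_l) : index (nth x0 s t) s' < a by rewrite -s'a index_mem ss'.
exists (fun t => Ordinal (idx_lt t)) => [t1 t2 /(congr1 val) /= eq_idx | t].
  apply/val_inj/eqP; rewrite -(nth_uniq x0 _ _ s_uniq) ?(leq_trans (ltn_ord _) ls) //.
  by rewrite -(nth_index x0 (ss' _ (mem_s t1))) eq_idx nth_index ?ss'.
by rewrite /= nth_index ?ss'.
Qed.

Lemma leq_card_bigcup (T I : finType) (P : pred I) (S : I -> {set T}) :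
  #|\bigcup_(i | P i) S i| <= \sum_(i | P i) #|S i|.
Proof.
elim/big_rec2: _ => [|i s U _ IH]; first by rewrite cards0.
by apply: leq_trans (leq_card_setU _ _).1 _; rewrite leq_add2l.
Qed.

Section Design.
Variables (n : nat) (blocks : seq {set 'I_n}).
Local Notation N := (size blocks).

Definition block (b : 'I_N) : {set 'I_n} := nth set0 blocks b.
Definition blocks_at (x : 'I_n) : seq 'I_N := [seq b <- enum 'I_N | x \in block b].
Definition blocks_at2 (x y : 'I_n) : seq 'I_N :=
  [seq b <- enum 'I_N | (x \in block b) && (y \in block b)].

Lemma count_blocks (P : pred {set 'I_n}) :
  count P blocks = count (P \o block) (enum 'I_N).
Proof.
rewrite -[RHS]/(count (preim block P) _) -count_map; congr count.
by rewrite (map_comp (nth set0 blocks) val) val_enum_ord -/(mkseq _ _) mkseq_nth.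
Qed.

Lemma size_filter_ord (P : pred 'I_N) :
  size [seq b <- enum 'I_N | P b] = \sum_(b | P b) 1.
Proof. by rewrite size_filter -sum1_count big_enum_cond. Qed.

Lemma TA_block (A : {set 'I_n}) :
  TA blocks A = \sum_(b < N) (#|block b :&: A| - 1).
Proof.
rewrite /TA (big_nth set0) big_mkord big_mkcond; apply: eq_bigr => b _.
by case: ifP => // /negbT; rewrite -leqNgt -subn_eq0 => /eqP.
Qed.

Lemma sum_nat_neq (x : 'I_n) (c : nat) : \sum_(y | y != x) c = (n - 1) * c.
Proof.
rewrite sum_nat_cond_const; congr (_ * _).
have -> : [set y | y != x] = [set~ x] by apply/setP => y; rewrite !inE.
by rewrite cardsC1 card_ord subn1.
Qed.

Variables (lam r : nat).
Hypothesis design : is_BIBD lam r blocks.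

Lemma card_block b : #|block b| = r.
Proof. by case: design => -> //; rewrite mem_nth. Qed.

Lemma size_blocks_at2 x y : x != y -> size (blocks_at2 x y) = lam.
Proof. by move=> xy; rewrite size_filter; case: design => _ /(_ x y xy) <-; rewrite count_blocks. Qed.

Lemma sum_blocks_at x :
  \sum_(b | x \in block b) (#|block b| - 1) = lam * (n - 1).
Proof.
transitivity (\sum_(b | x \in block b) \sum_(y | y != x) (y \in block b) : nat).
  apply: eq_bigr => b xb; rewrite (cardsD1 x) xb add1n subn1 /=.
  rewrite -sum1_card big_mkcond [RHS]big_mkcond; apply: eq_bigr => y _.
  by rewrite !inE; case: (y == x); case: (y \in block b).
rewrite exchange_big /= mulnC -(sum_nat_neq x); apply: eq_bigr => y yx.
have xy : x != y by rewrite eq_sym.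
rewrite -(size_blocks_at2 xy) size_filter_ord big_mkcondr /=.
by apply: eq_bigr => b _; case: (y \in block b).
Qed.

Lemma size_blocks_at x : size (blocks_at x) * (r - 1) = lam * (n - 1).
Proof.
rewrite -(sum_blocks_at x) size_filter_ord big_distrl /=.
by apply: eq_bigr => b _; rewrite mul1n card_block.
Qed.

Lemma sum_card_block :
  (\sum_b (#|block b| - 1)) * r = lam * n * (n - 1).
Proof.
transitivity (\sum_x \sum_(b | x \in block b) (#|block b| - 1)); last first.
  rewrite (eq_bigr _ (fun x _ => sum_blocks_at x)) sum_nat_const card_ord.
  by rewrite mulnA [n * lam]mulnC.
rewrite (exchange_big_dep xpredT) //= big_distrl /=; apply: eq_bigr => b _.
rewrite sum_nat_cond_const mulnC -(card_block b); congr (_ * _).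
by apply: eq_card => y; rewrite !inE.
Qed.
End Design.

Local Open Scope ring_scope.

(* Rows are added one at a time: a new row e outside span(E) + W exists by
   counting, and since W is closed under scaling, u *m col_mx e E \in W then
   forces the new coordinate of u to vanish. *)
Lemma exists_mx_avoiding (F : finFieldType) (D M : nat) (W : {set 'rV[F]_D}) :
  (forall a w, w \in W -> a *: w \in W) ->
  (forall s, s < M -> #|F| ^ s * #|W| < #|F| ^ D)%N ->
  exists E : 'M[F]_(M, D), forall u, u *m E \in W -> u = 0.
Proof.
move=> WZ; elim: M => [|M IH] HM; first by exists 0 => u _; apply: thinmx0.
have [E HE] := IH (fun s lt_sM => HM s (ltnW lt_sM)).
pose S := [set v.1 *m E + v.2 | v in setX [set: 'rV[F]_M] W].
have /set0Pn[e] : ~: S != set0.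
  rewrite -card_gt0 -(ltn_add2l #|S|) addn0 cardsC card_mx mul1n.
  apply: leq_ltn_trans (HM M (ltnSn M)).
  by apply: leq_trans (leq_imset_card _ _) _; rewrite cardsX cardsT card_mx mul1n.
rewrite inE => eNS; exists (col_mx e E) => u; rewrite -[u](@hsubmxK _ 1 1 M).
set a := lsubmx _; set u1 := rsubmx _ => uEW.
have {uEW} : a *m e + u1 *m E \in W by rewrite -mul_row_col.
have -> : a *m e = a 0 0 *: e by rewrite {1}[a]mx11_scalar mul_scalar_mx.
move=> uEW.
have [a0 | a_nz] := eqVneq (a 0 0) 0.
  move: uEW; rewrite a0 scale0r add0r => /HE ->.
  have -> : a = 0 by apply/rowP => i; rewrite ord1 a0 mxE.
  by rewrite row_mx0.
case/negP: eNS; apply/imsetP.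
exists (- (a 0 0)^-1 *: u1, (a 0 0)^-1 *: (a 0 0 *: e + u1 *m E)).
  by rewrite !inE /= WZ.
by rewrite /= -scalemxAl scalerDr scalerA mulVf // scale1r scaleNr addrCA addNr addr0.
Qed.

Section ParityCode.
Variables (F : finFieldType) (n : nat) (blocks : seq {set 'I_n}).
Local Notation N := (size blocks).
Local Notation block := (@block n blocks).
Local Notation blocks_at := (blocks_at blocks).
Local Notation blocks_at2 := (blocks_at2 blocks).
Local Notation free := (nonlead block).
Local Notation D := #|free|.

Definition lead (b : 'I_N) : option 'I_n := [pick x in block b].

Definition parity_coef (b : 'I_N) (x : 'I_n) (t : 'I_D) : F :=
  let p := enum_val t in
  if x \notin block b then 0
  else if Some x == lead b then - (p.1 == b)%:R
  else (p == (b, x))%:R.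

(* A vector [f] over the non-lead incidences determines the codeword whose
   symbol at a non-lead incidence is the corresponding coordinate of [f] and
   whose symbol at the lead point of a block is minus the sum of the others. *)
Definition symbol (f : 'rV[F]_D) (b : 'I_N) (x : 'I_n) : F :=
  \sum_t f 0 t * parity_coef b x t.

Lemma symbol0 b x : symbol 0 b x = 0.
Proof. by rewrite /symbol big1 // => t _; rewrite mxE mul0r. Qed.

Lemma symbolB f g b x : symbol (f - g) b x = symbol f b x - symbol g b x.
Proof. by rewrite /symbol -sumrB; apply: eq_bigr => t _; rewrite !mxE mulrBl. Qed.

Lemma symbolZ a f b x : symbol (a *: f) b x = a * symbol f b x.
Proof. by rewrite /symbol mulr_sumr; apply: eq_bigr => t _; rewrite mxE mulrA. Qed.

Lemma symbol_notin f b x : x \notin block b -> symbol f b x = 0.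
Proof. by move=> xNb; rewrite /symbol big1 // => t _; rewrite /parity_coef xNb mulr0. Qed.

Lemma symbol_free f t : symbol f (enum_val t).1 (enum_val t).2 = f 0 t.
Proof.
have := enum_valP t; rewrite inE -/(lead _) => /andP[xb /negbTE xNlead].
rewrite /symbol (bigD1 t) //= big1 => [|t' t't].
  by rewrite /parity_coef xb xNlead -surjective_pairing eqxx mulr1 addr0.
rewrite /parity_coef xb xNlead -surjective_pairing.
by rewrite (inj_eq enum_val_inj) (negbTE t't) mulr0.
Qed.

Lemma symbols_eq0 f : (forall b x, symbol f b x = 0) -> f = 0.
Proof. by move=> f0; apply/rowP => t; rewrite -symbol_free f0 mxE. Qed.

Lemma sum_parity_coef b t : \sum_(x in block b) parity_coef b x t = 0.
Proof.
case lead_b: (lead b) => [l|]; last first.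
  by rewrite big_pred0 // => x; move: lead_b; rewrite /lead; case: pickP => // /(_ x).
have lb : l \in block b by move: lead_b; rewrite /lead; case: pickP => // ? ? [<-].
have := enum_valP t; rewrite inE -/(lead (enum_val t).1).
rewrite (bigD1 l) //= {1}/parity_coef lb lead_b eqxx /=.
rewrite (eq_bigr (fun x => (enum_val t == (b, x))%:R)) => [|x /andP[xb xl]]; last first.
  by rewrite /parity_coef xb lead_b (inj_eq Some_inj) (negbTE xl).
case: (enum_val t) => b' y /= /andP[yb yl].
have [b'b | b'b] := eqVneq b' b; last first.
  by rewrite big1 ?oppr0 ?addr0 // => x _; rewrite xpair_eqE (negbTE b'b).
move: yb yl; rewrite b'b lead_b (inj_eq Some_inj) => yb yl.
rewrite (bigD1 y) ?yb //= big1 ?eqxx ?addr0 ?addNr // => x /andP[_ xy].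
by rewrite xpair_eqE eqxx eq_sym (negbTE xy).
Qed.
Lemma sum_symbol f b : \sum_(x in block b) symbol f b x = 0.
Proof.
rewrite exchange_big big1 //= => t _.
by rewrite -mulr_sumr sum_parity_coef mulr0.
Qed.

Lemma symbol_eq0_others f b x :
  (forall y, y != x -> symbol f b y = 0) -> symbol f b x = 0.
Proof.
move=> others0; have [xb | /symbol_notin //] := boolP (x \in block b).
have := sum_symbol f b; rewrite (bigD1 x) //= big1 ?addr0 // => y /andP[_].
exact: others0.
Qed.

Definition supported_on (A : {set 'I_n}) : {set 'rV[F]_D} :=
  [set f | [forall x in ~: A, forall b, symbol f b x == 0]].

Lemma supported_onP (A : {set 'I_n}) f :
  reflect (forall x, x \notin A -> forall b, symbol f b x = 0) (f \in supported_on A).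
Proof.
rewrite inE; apply: (iffP forall_inP) => [f0 x xNA b | f0 x].
  by have := f0 x; rewrite inE => /(_ xNA) /forallP /(_ b) /eqP.
by rewrite inE => xNA; apply/forallP => b; rewrite f0.
Qed.

Lemma supported_on0 (A : {set 'I_n}) : 0 \in supported_on A.
Proof. by apply/supported_onP => x _ b; rewrite symbol0. Qed.

Lemma supported_onZ (A : {set 'I_n}) a f : f \in supported_on A -> a *: f \in supported_on A.
Proof. by move/supported_onP=> f0; apply/supported_onP => x xNA b; rewrite symbolZ f0 ?mulr0. Qed.

Lemma supported_onB (A : {set 'I_n}) f g :
  f \in supported_on A -> g \in supported_on A -> f - g \in supported_on A.
Proof.
move=> /supported_onP f0 /supported_onP g0; apply/supported_onP => x xNA b.
by rewrite symbolB f0 ?g0 ?subrr.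
Qed.

Lemma supported_on_eq0 (A : {set 'I_n}) f : f \in supported_on A ->
  (forall b x, (b, x) \in nonlead (fun b => block b :&: A) -> symbol f b x = 0) ->
  f = 0.
Proof.
move=> /supported_onP f0 free0; apply: symbols_eq0 => b x.
have off_lead y : Some y != [pick z in block b :&: A] -> symbol f b y = 0.
  move=> yNlead; have [yA | /f0 //] := boolP (y \in A).
  have [yb | /symbol_notin //] := boolP (y \in block b).
  by apply: free0; rewrite inE /= inE yb yA.
have [/off_lead // | /negbNE/eqP lead_x] := boolP (Some x != [pick z in block b :&: A]).
by apply: symbol_eq0_others => y yx; apply: off_lead; rewrite -lead_x (inj_eq Some_inj).
Qed.

Lemma card_supported_on (A : {set 'I_n}) : (#|supported_on A| <= #|F| ^ TA blocks A)%N.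
Proof.
pose C b := block b :&: A.
pose coords f := [ffun p : {p | p \in nonlead C} => symbol f (val p).1 (val p).2].
have coords_inj : {in supported_on A &, injective coords}.
  move=> f g fA gA /ffunP eq_fg; apply/eqP; rewrite -subr_eq0; apply/eqP.
  apply: (supported_on_eq0 (supported_onB fA gA)) => b x bx.
  by move: (eq_fg (Sub (b, x) bx)); rewrite !ffunE symbolB => ->; rewrite subrr.
rewrite -(card_in_imset coords_inj); apply: leq_trans (max_card _) _.
by rewrite card_ffun card_sig card_nonlead TA_block.
Qed.

Lemma exists_generator k M : (k <= n)%N -> (M <= D - Tmax k blocks)%N ->
    ('C(n, k) * Tmax k blocks * M < #|F|)%N ->
  exists E : 'M[F]_(M, D), forall A : {set 'I_n}, #|A| = (n - k)%N ->
    forall u, u *m E \in supported_on A -> u = 0.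
Proof.
move=> kn MDT CTMq; set T := Tmax k blocks in MDT CTMq.
set W := \bigcup_(A : {set 'I_n} | #|A| == (n - k)%N) supported_on A.
suff [E EW] : exists E : 'M[F]_(M, D), forall u, u *m E \in W -> u = 0.
  by exists E => A cardA u uA; apply: EW; apply/bigcupP; exists A; rewrite ?cardA.
have q_gt0 : (0 < #|F|)%N by rewrite ltnW ?finNzRing_gt1.
have card_W (A : {set 'I_n}) : #|A| = (n - k)%N -> (#|supported_on A| <= #|F| ^ T)%N.
  move=> cardA; apply: leq_trans (card_supported_on A) (leq_pexp2l q_gt0 _).
  by apply: leq_bigmax_cond; rewrite cardA.
apply: exists_mx_avoiding => [a w /bigcupP[A cardA wA] | s ltsM].
  by apply/bigcupP; exists A; rewrite ?supported_onZ.
have [T0 | T_gt0] := posnP T.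
  have W1 : (#|W| <= 1)%N.
    suff /subset_leq_card : W \subset [set 0] by rewrite cards1.
    apply/subsetP => w /bigcupP[A /eqP cardA wA]; rewrite inE; apply/eqP.
    have := card_W A cardA; rewrite T0 => /card_le1_eqP; apply=> //.
    exact: supported_on0.
  apply: leq_ltn_trans (leq_mul (leqnn _) W1) _.
  by rewrite muln1 ltn_exp2l ?finNzRing_gt1 //; move: MDT; rewrite T0 subn0; lia.
have Cq : ('C(n, k) < #|F|)%N.
  by apply: leq_ltn_trans CTMq; rewrite -mulnA leq_pmulr // muln_gt0 T_gt0; lia.
have card_bigW : (#|W| <= 'C(n, k) * #|F| ^ T)%N.
  apply: leq_trans (leq_card_bigcup _ _) _.
  apply: (@leq_trans (\sum_(A : {set 'I_n} | #|A| == (n - k)%N) #|F| ^ T)).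
    by apply: leq_sum => A /eqP /card_W.
  by rewrite sum_nat_cond_const card_draws card_ord bin_sub.
apply: leq_ltn_trans (leq_mul (leqnn _) card_bigW) _.
apply: (@leq_trans (#|F| ^ (s + T.+1))); last by rewrite leq_pexp2l //; lia.
by rewrite expnD expnS ltn_pmul2l ?expn_gt0 ?q_gt0 // ltn_pmul2r ?expn_gt0 ?q_gt0.
Qed.

Variables (M alpha : nat) (b0 : 'I_N) (E : 'M[F]_(M, D)).

Definition node_mx (x : 'I_n) : 'M[F]_(D, alpha) :=
  \matrix_(t, p) parity_coef (nth b0 (blocks_at x) p) x t.

Definition block_code (x : 'I_n) : 'M[F]_(M, alpha) := E *m node_mx x.

Lemma block_code_content m x p :
  content block_code m x 0 p = symbol (m *m E) (nth b0 (blocks_at x) p) x.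
Proof. by rewrite /content /block_code mulmxA mxE /symbol; apply: eq_bigr => t _; rewrite !mxE. Qed.

Lemma symbol_diff_eq0 m m' x p :
  content block_code m x 0 p = content block_code m' x 0 p ->
  symbol ((m - m') *m E) (nth b0 (blocks_at x) p) x = 0.
Proof. by rewrite !block_code_content mulmxBl symbolB => ->; rewrite subrr. Qed.

Hypothesis size_at : forall x, size (blocks_at x) = alpha.

Lemma nth_blocks_at x b : x \in block b -> exists p : 'I_alpha, nth b0 (blocks_at x) p = b.
Proof.
move=> xb; have bx : b \in blocks_at x by rewrite mem_filter xb mem_enum.
have lt_idx : (index b (blocks_at x) < alpha)%N by rewrite -(size_at x) index_mem.
by exists (Ordinal lt_idx); rewrite nth_index.
Qed.

Lemma recoverable_block_code k :
    (forall A : {set 'I_n}, #|A| = (n - k)%N ->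
      forall u, u *m E \in supported_on A -> u = 0) ->
  recoverable k block_code.
Proof.
move=> E_avoids K cardK m m' eq_K; apply/eqP; rewrite -subr_eq0; apply/eqP.
apply: (E_avoids (~: K)); first by rewrite cardsCs setCK card_ord cardK.
apply/supported_onP => x; rewrite inE negbK => xK b.
have [xb | /symbol_notin //] := boolP (x \in block b).
have [p <-] := nth_blocks_at xb.
by apply: symbol_diff_eq0; rewrite (eq_K x xK).
Qed.

Variable lam : nat.
Hypotheses (size_at2 : forall x y, x != y -> size (blocks_at2 x y) = lam)
  (lam_le_alpha : (lam <= alpha)%N).

Lemma uncoded_repair_block_code : uncoded_repair (n - 1) lam block_code.
Proof.
move=> j A cardA jNA.
have eqA : A =i [set~ j].
  apply/subset_cardP; first by rewrite cardsC1 card_ord cardA subn1.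
  by apply/subsetP => y yA; rewrite !inE; apply: contraNneq jNA => <-.
have sel_spec y : {sel : 'I_lam -> 'I_alpha | injective sel &
    forall t, nth b0 (blocks_at y) (sel t) = nth b0 (blocks_at2 y j) t}.
  apply: subseq_index_map; last exact: size_at.
  - exact/filter_uniq/enum_uniq.
  - by move=> b; rewrite !mem_filter => /andP[/andP[-> _] ->].
  have [-> | yj] := eqVneq y j; last by rewrite size_at2.
  by rewrite /blocks_at2 (eq_filter (fun b => andbb _)) -/(blocks_at j) size_at.
exists (fun y => s2val (sel_spec y)); split => [y | m m' sent].
  exact: (s2valP (sel_spec y)).
apply/rowP => p; apply/eqP; rewrite -subr_eq0 !block_code_content -symbolB -mulmxBl.
set b := nth b0 (blocks_at j) p.
have jb : j \in block b.
  have : b \in blocks_at j by rewrite mem_nth ?size_at.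
  by rewrite mem_filter => /andP[].
apply/eqP; apply: symbol_eq0_others => y yj.
have [yb | /symbol_notin //] := boolP (y \in block b).
have b_yj : b \in blocks_at2 y j by rewrite mem_filter yb jb mem_enum.
have lt_idx : (index b (blocks_at2 y j) < lam)%N by rewrite -(size_at2 yj) index_mem.
rewrite -(nth_index b0 b_yj) -[index _ _]/(nat_of_ord (Ordinal lt_idx)).
rewrite -(s2valP' (sel_spec y)); apply: symbol_diff_eq0.
by apply: sent; rewrite eqA !inE.
Qed.
End ParityCode.

Lemma uncoded_repair_linear (F : fieldType) n M alpha d beta
    (G : 'I_n -> 'M[F]_(M, alpha)) :
  uncoded_repair d beta G -> linear_repairable d beta G.
Proof.
move=> uncoded j A cardA jNA; have [sel [_ sel_repairs]] := uncoded j A cardA jNA.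
exists (fun i => \matrix_(p, t) (p == sel i t)%:R) => m m' eqH.
apply: sel_repairs => i iA t; move/rowP: (eqH i iA) => /(_ t).
have selE (v : 'rV[F]_alpha) : (v *m \matrix_(p, t) (p == sel i t)%:R) 0 t = v 0 (sel i t).
  rewrite mxE (bigD1 (sel i t)) //= big1 => [|p /negbTE pNsel]; last by rewrite mxE pNsel mulr0.
  by rewrite mxE eqxx mulr1 addr0.
by rewrite !selE.
Qed.

Local Close Scope ring_scope.

Theorem mainTheorem3 (n r lam k : nat) (blocks : seq {set 'I_n})
  (q : nat) (F : finFieldType) :
  (2 <= n)%N -> (2 <= r <= n)%N -> (1 <= lam)%N -> (1 <= k <= n - 1)%N ->
  is_BIBD lam r blocks ->
  #|F| = q ->
  ('C(n, k) * Tmax k blocks * M_par r lam k blocks < q)%N ->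
  exists G : 'I_n -> 'M[F]_(M_par r lam k blocks, alpha_par n r lam),
    regenerating_code k (n - 1) lam G /\ uncoded_repair (n - 1) lam G.
Proof.
move=> n_ge2 /andP[r_ge2 r_le_n] lam_ge1 /andP[_ k_lt_n] design cardF CTMq.
set alpha := alpha_par n r lam.
have r1_gt0 : 0 < r - 1 by rewrite subn_gt0.
have size_at x : size (blocks_at blocks x) = alpha.
  by rewrite /alpha /alpha_par -(size_blocks_at design x) mulnK.
have lam_le_alpha : lam <= alpha.
  rewrite -(leq_pmul2r r1_gt0) -(size_at (Ordinal (ltnW n_ge2))) (size_blocks_at design).
  by rewrite leq_mul2l leq_sub2r ?orbT.
have N_gt0 : 0 < size blocks.
  have [_ /(_ (Ordinal (ltnW n_ge2)) (Ordinal n_ge2) isT) count_lam] := design.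
  by rewrite -count_lam in lam_ge1; apply: leq_trans lam_ge1 (count_size _ _).
have D_eq : #|nonlead (@block n blocks)| = lam * n * (n - 1) %/ r.
  by rewrite card_nonlead -(sum_card_block design) mulnK // (leq_trans _ r_ge2).
have [|||E E_avoids] := @exists_generator F n blocks k (M_par r lam k blocks).
- by apply: leq_trans k_lt_n (leq_subr _ _).
- by rewrite D_eq.
- by rewrite cardF.
have uncoded := uncoded_repair_block_code (Ordinal N_gt0) E size_at
  (size_blocks_at2 design) lam_le_alpha.
exists (block_code alpha (Ordinal N_gt0) E); split; last exact: uncoded.
by split; [exact: recoverable_block_code | exact: uncoded_repair_linear].
Qed.
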